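(* Let $G=(V,E)$ be a finite simple graph of order $n$ and let $T=n-1$. If $(s,x,y,z)$ is an optimal solution of the integer program with the constraints of the Infection Model $\mathrm{IM}(G,T)$ and objective ''minimize $\sum_{v\in V}s_v+\frac{z}{2T}$'', then $C=\{v\in V\colon s_v=1\}$ is a minimum zero forcing set of $G$ with $\mathrm{pt}(G)=\mathrm{pt}(G,C)=z$.
   Context: Zero forcing: under the standard color change rule a filled vertex $u$ can force a non-filled vertex $v$ if $v$ is the only non-filled neighbor of $u$; $C\subseteq V$ is a zero forcing set if, starting with $C$ filled and repeatedly forcing, all of $V$ becomes filled. $\mathrm{Z}(G)$ is the minimum size of a zero forcing set; a minimum zero forcing set has size $\mathrm{Z}(G)$. The propagation time $\mathrm{pt}(G,C)$ is the smallest $t^*$ such that, starting from $C^{[0]}=C$ and setting $C^{[t]}=C^{[t-1]}\cup\{v\notin C^{[t-1]}\colon$ some $u\in C^{[t-1]}$ has $v$ as its only neighbor outside $C^{[t-1]}\}$, one has $C^{[t^*]}=V$ ($\infty$ if $C$ is not a zero forcing set). $\mathrm{pt}(G)=\min\{\mathrm{pt}(G,C)\colon C$ a minimum zero forcing set$\}$. $N(u)$ is the neighborhood of $u$. Infection Model constraints: let $A$ be the set of arcs containing both $(u,v)$ and $(v,u)$ for each edge $\{u,v\}\in E$. Variables $s_v\in\{0,1\}$ and $x_v\in\{0,1,\dots,T\}$ for $v\in V$, $y_a\in\{0,1\}$ for $a\in A$, and $z\in\{0,1,\dots,T\}$, subject to: (i) $s_v+\sum_{a=(u,v)\in A}y_a=1$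 for all $v\in V$; (ii) $x_u-x_v+(T+1)y_a\leq T$ for all $a=(u,v)\in A$; (iii) $x_w-x_v+(T+1)y_a\leq T$ for all $a=(u,v)\in A$ and $w\in N(u)\setminus\{v\}$; (iv) $x_v-z\leq 0$ for all $v\in V$. *)

From mathcomp Require Import all_boot all_order all_algebra.
Set Implicit Arguments. Unset Strict Implicit. Unset Printing Implicit Defensive.
Import GRing.Theory Num.Theory.

Section ZF.
Variables (V : finType) (e : rel V).

(* one round of the standard color change rule, applied simultaneously *)
Definition zf_step (C : {set V}) : {set V} :=
  C :|: [set v | (v \notin C) &&
           [exists u, [&& u \in C, e u v &
              [forall w, (e u w && (w \notin C)) ==> (w == v)]]]].

Definition zf_prop (C : {set V}) (t : nat) : {set V} := iter t zf_step C.

Definition zero_forcing_set (C : {set V}) : Prop :=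
  exists t, zf_prop C t = setT.

Definition min_zero_forcing_set (C : {set V}) : Prop :=
  zero_forcing_set C /\ forall D : {set V}, zero_forcing_set D -> #|C| <= #|D|.

Definition pt_set_is (C : {set V}) (t : nat) : Prop :=
  zf_prop C t = setT /\ forall t', t' < t -> zf_prop C t' != setT.

Definition pt_graph_is (t : nat) : Prop :=
  (exists C, min_zero_forcing_set C /\ pt_set_is C t) /\
  forall C t', min_zero_forcing_set C -> pt_set_is C t' -> t <= t'.

(* Constraints of the Infection Model IM(G,T); arcs are the ordered pairs
   (u,v) with e u v.  y is only meaningful on arcs. Binary variables are
   booleans (coerced to 0/1); the linear inequalities with subtraction are
   stated with terms moved to the other side (over nat). *)
Definition IM_feasible (T : nat) (s : V -> bool) (x : V -> nat)
    (y : V -> V -> bool) (z : nat) : Prop :=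
  [/\ (forall v, x v <= T) /\ z <= T,
      (forall v, s v + \sum_(u | e u v) (y u v : nat) = 1),
      (forall u v, e u v -> x u + T.+1 * y u v <= T + x v),
      (forall u v w, e u v -> e u w -> w != v ->
          x w + T.+1 * y u v <= T + x v)
    & (forall v, x v <= z)].

Definition IM_objective (T : nat) (s : V -> bool) (z : nat) : rat :=
  ((\sum_(v : V) (s v : nat))%N%:R + z%:R / (2 * T)%N%:R)%R.

Definition IM_optimal (T : nat) s x y z : Prop :=
  IM_feasible T s x y z /\
  forall s' x' y' z', IM_feasible T s' x' y' z' ->
     (IM_objective T s z <= IM_objective T s' z')%R.
End ZF.

From mathcomp Require Import all_boot all_order all_algebra.
From mathcomp Require Import zify lra.
Import GRing.Theory Num.Theory.

(* A feasible solution of IM(G,T) is a certificate for a forcing process: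
   [s] marks the initially filled vertices, [y u v] says that [u] forces [v],
   and [x] bounds the filling times; constraints (ii) and (iii) say that when
   [u] forces [v], [u] and all its other neighbours are filled strictly
   earlier, so [C^[z] = V].  Conversely a zero forcing set [D] with
   propagation time [t <= n - 1] gives a feasible solution with [s = D],
   [z = t], [x] the filling times and [y] one chosen forcing per vertex.
   Since [z / 2T < 1], the objective compares solutions lexicographically by
   [(|C|, z)], so an optimum minimises [|C|] first and then [z]. *)

Set Implicit Arguments.
Unset Strict Implicit.
Unset Printing Implicit Defensive.

Section ZeroForcingProcess.
Variables (V : finType) (e : rel V).
Implicit Types (A D : {set V}) (k m t : nat).

Lemma subset_zf_step A : A \subset zf_step e A.
Proof. exact: subsetUl. Qed.

Lemma zf_prop_mono A k m : k <= m -> zf_prop e A k \subset zf_prop e A m.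
Proof.
move=> /subnK <-; rewrite /zf_prop iterD.
elim: (m - k) => [|i IH] /=; first exact: subxx.
exact: subset_trans IH (subset_zf_step _).
Qed.

Lemma zf_prop_stable A k :
  zf_step e (zf_prop e A k) = zf_prop e A k ->
  forall m, k <= m -> zf_prop e A m = zf_prop e A k.
Proof.
move=> stable m /subnK <-; rewrite /zf_prop iterD.
by elim: (m - k) => //= i ->.
Qed.

Lemma zf_prop_set0 k : zf_prop e set0 k = set0.
Proof.
elim: k => //= k ->; apply/setP => v; rewrite !inE /=.
by apply/negbTE/existsP => -[u]; rewrite inE.
Qed.

Lemma zero_forcing_pt_set D : zero_forcing_set e D -> exists t, pt_set_is e D t.
Proof.
move=> [t0 Dt0]; have ex_t : exists t, zf_prop e D t == setT.
  by exists t0; rewrite Dt0.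
case: (ex_minnP ex_t) => t /eqP Dt t_min; exists t; split=> // t' lt_t't.
by apply: contraTneq lt_t't => /eqP/t_min; rewrite -leqNgt.
Qed.

Lemma pt_set_leq_forcing A t m :
  pt_set_is e A t -> zf_prop e A m = setT -> t <= m.
Proof.
by move=> [_ At_min] Am; rewrite leqNgt; apply: contra_eqN Am => /At_min.
Qed.

Lemma card_zf_prop_before A t k :
  pt_set_is e A t -> k <= t -> #|A| + k <= #|zf_prop e A k|.
Proof.
move=> [At At_min]; elim: k => [|k IH] lt_kt; first by rewrite addn0.
have grows : zf_prop e A k \proper zf_prop e A k.+1.
  rewrite properEneq subset_zf_step andbT eq_sym; apply/eqP => stable.
  have := At_min k lt_kt.
  by rewrite -(zf_prop_stable stable (ltnW lt_kt)) At eqxx.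
by rewrite addnS; apply: leq_ltn_trans (IH (ltnW lt_kt)) (proper_card grows).
Qed.

(* [t] rounds each add a vertex to a nonempty starting set. *)
Lemma pt_set_leq A t : pt_set_is e A t -> t <= #|V|.-1.
Proof.
move=> ptA; have := card_zf_prop_before ptA (leqnn t).
rewrite ptA.1 cardsT; case: t ptA => // t [At At_min].
have : A != set0.
  apply: contra_neq (At_min 0 isT) => A0.
  by rewrite -At A0 !zf_prop_set0.
rewrite -card_gt0; lia.
Qed.

End ZeroForcingProcess.

Section FeasibleSolutionForces.
Variables (V : finType) (e : rel V).
Variables (T : nat) (s : V -> bool) (x : V -> nat) (y : V -> V -> bool).
Variable z : nat.
Hypothesis feas : IM_feasible e T s x y z.

Lemma IM_parent v : ~~ s v -> exists2 u, e u v & y u v.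
Proof.
have [_ in_deg _ _ _] := feas; move=> /negbTE sv0.
apply/exists_inP; apply: contraPT (in_deg v) => /exists_inPn no_parent.
by rewrite sv0 big1 // => u /no_parent /negbTE ->.
Qed.

Lemma IM_parent_earlier u v : e u v -> y u v -> x u < x v.
Proof. by have [_ _ arc _ _] := feas => /arc; case: (y u v); lia. Qed.

Lemma IM_parent_neighbour_earlier u v w :
  e u v -> y u v -> e u w -> w != v -> x w < x v.
Proof.
have [_ _ _ nbr _] := feas => euv + euw /(nbr _ _ _ euv euw).
by case: (y u v); lia.
Qed.

Lemma IM_zf_prop t v : x v <= t -> v \in zf_prop e [set v | s v] t.
Proof.
elim: t v => [|t IH] v le_xv; have [|/IM_parent [u euv yuv]] := boolP (s v).
- by rewrite inE.
- by have := IM_parent_earlier euv yuv; lia.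
- by move=> sv; apply: subsetP (zf_prop_mono _ _ (leq0n _)) _ _; rewrite inE.
rewrite /= /zf_step !inE; case: (v \in _) => //=.
have le_xu : x u <= t by have := IM_parent_earlier euv yuv; lia.
apply/existsP; exists u; rewrite euv IH //=.
apply/forallP => w; apply/implyP => /andP [euw].
apply: contraNT => neq_wv; apply: IH.
by have := IM_parent_neighbour_earlier euv yuv euw neq_wv; lia.
Qed.

Lemma IM_zero_forcing : zf_prop e [set v | s v] z = setT.
Proof.
by have [_ _ _ _ le_xz] := feas; apply/setP => v; rewrite inE IM_zf_prop.
Qed.

End FeasibleSolutionForces.

Section ForcingGivesFeasibleSolution.
Variables (V : finType) (e : rel V) (D : {set V}) (t : nat).
Hypothesis ptD : pt_set_is e D t.

Lemma pt_set_filled v : exists k, v \in zf_prop e D k.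
Proof. by exists t; rewrite ptD.1 inE. Qed.

Definition infection_time v := ex_minn (pt_set_filled v).

Lemma infection_timeP v : v \in zf_prop e D (infection_time v).
Proof. by rewrite /infection_time; case: ex_minnP. Qed.

Lemma infection_time_min v k : v \in zf_prop e D k -> infection_time v <= k.
Proof. by rewrite /infection_time; case: ex_minnP => m _; apply. Qed.

Lemma infection_time_leq v : infection_time v <= t.
Proof. by apply: infection_time_min; rewrite ptD.1 inE. Qed.

Lemma infection_time_gt0 v : v \notin D -> 0 < infection_time v.
Proof.
apply: contraNT; rewrite lt0n negbK => /eqP t0.
by rewrite -[D]/(zf_prop e D 0) -t0 infection_timeP.
Qed.

Definition forces_at_infection v u :=
  let before := zf_prop e D (infection_time v).-1 in
  [&& u \in before, e u v &
      [forall w, (e u w && (w \notin before)) ==> (w == v)]].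

Lemma exists_forcer v : v \notin D -> exists u, forces_at_infection v u.
Proof.
move=> /infection_time_gt0 /prednK tv_pos; have := infection_timeP v.
rewrite -tv_pos /= /zf_step !inE => /orP [/infection_time_min|]; first lia.
by move=> /andP [_ /existsP].
Qed.

Definition forcing_arc u v :=
  (v \notin D) && ([pick u' | forces_at_infection v u'] == Some u).

Lemma forcing_arcP u v :
  forcing_arc u v -> forces_at_infection v u /\ v \notin D.
Proof. by case/andP=> vD; case: pickP => // u' + /eqP [<-]. Qed.

Lemma IM_feasible_pt_set :
  IM_feasible e #|V|.-1 (fun v => v \in D) infection_time forcing_arc t.
Proof.
have le_tn := pt_set_leq ptD.
split.
- by split=> // v; apply: leq_trans (infection_time_leq v) le_tn.
- move=> v; rewrite /forcing_arc; case: (boolP (v \in D)) => vD /=.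
    by rewrite big1.
  case: pickP => [u0 u0_forces | none]; last first.
    by have [u] := exists_forcer vD; rewrite none.
  have [_ eu0v _] := and3P u0_forces.
  rewrite (bigD1 u0) //= eqxx big1 // => u /andP [_ neq_uu0].
  by case: eqP => // -[eq_u0u]; rewrite eq_u0u eqxx in neq_uu0.
- move=> u v euv; case yuv: (forcing_arc u v); last first.
    by have := infection_time_leq u; lia.
  have [/and3P [u_filled _ _] /infection_time_gt0 tv_pos] := forcing_arcP yuv.
  by have := infection_time_min u_filled; lia.
- move=> u v w euv euw neq_wv; case yuv: (forcing_arc u v); last first.
    by have := infection_time_leq w; lia.
  have [/and3P [_ _ only_v] /infection_time_gt0 tv_pos] := forcing_arcP yuv.
  have w_filled : w \in zf_prop e D (infection_time v).-1.
    apply: contraNT neq_wv => w_unfilled.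
    by move/forallP/(_ w): only_v; rewrite euw w_unfilled.
  by have := infection_time_min w_filled; lia.
- exact: infection_time_leq.
Qed.

End ForcingGivesFeasibleSolution.

Section ObjectiveIsLexicographic.
Local Open Scope ring_scope.

Lemma ler_nat_add_frac (R : realDomainType) (a b : nat) (p q : R) :
  0 <= p -> q < 1 -> a%:R + p <= b%:R + q -> (a <= b)%N /\ (a = b -> p <= q).
Proof.
move=> p_ge0 q_lt1 le_ab; split=> [|eq_ab]; last first.
  by move: le_ab; rewrite eq_ab lerD2l.
rewrite leqNgt; apply/negP => lt_ba.
have : b.+1%:R <= a%:R :> R by rewrite ler_nat.
rewrite -addn1 natrD; lra.
Qed.

Lemma IM_time_weight_ge0 (T k : nat) : 0 <= k%:R / (2 * T)%:R :> rat.
Proof. by rewrite divr_ge0. Qed.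

(* For [T = 0] the weight [k / 0] is [0], which is still below [1]. *)
Lemma IM_time_weight_lt1 (T k : nat) :
  (k <= T)%N -> k%:R / (2 * T)%:R < 1 :> rat.
Proof.
case: (posnP T) => [-> | T_pos] le_kT; first by rewrite muln0 invr0 mulr0.
by rewrite ltr_pdivrMr ?ltr0n ?mul1r ?ltr_nat; lia.
Qed.

Lemma IM_time_weight_le_nat (T k1 k2 : nat) : (k1 <= T)%N ->
  k1%:R / (2 * T)%:R <= k2%:R / (2 * T)%:R :> rat -> (k1 <= k2)%N.
Proof.
case: (posnP T) => [T0 | T_pos] le_k1T; first by have -> : k1 = 0%N by lia.
by rewrite ler_pM2r ?invr_gt0 ?ltr0n ?ler_nat; lia.
Qed.

End ObjectiveIsLexicographic.

Lemma sum_nat_of_bool (T : finType) (P : pred T) :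
  \sum_(i : T) (P i : nat) = #|P|.
Proof.
rewrite -sum1_card [RHS]big_mkcond /=.
by apply: eq_bigr => i _; rewrite unfold_in; case: (P i).
Qed.

Section OptimalSolution.
Variables (V : finType) (e : rel V).
Variables (s : V -> bool) (x : V -> nat) (y : V -> V -> bool) (z : nat).
Hypothesis opt : IM_optimal e #|V|.-1 s x y z.

Lemma IM_optimal_lex D t : pt_set_is e D t ->
  #|[set v | s v]| <= #|D| /\ (#|[set v | s v]| = #|D| -> z <= t).
Proof.
move=> ptD; have [[[_ le_zn] _ _ _ _] optimal] := opt.
have := optimal _ _ _ _ (IM_feasible_pt_set ptD).
rewrite /IM_objective !sum_nat_of_bool cardsE.
case/ler_nat_add_frac; rewrite ?IM_time_weight_ge0 //.
  by rewrite IM_time_weight_lt1 // (pt_set_leq ptD).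
by move=> le_CD le_zt; split=> // /le_zt /IM_time_weight_le_nat; apply.
Qed.

End OptimalSolution.

Theorem corollary3p4 (V : finType) (e : rel V)
    (e_sym : symmetric e) (e_irr : irreflexive e)
    (s : V -> bool) (x : V -> nat) (y : V -> V -> bool) (z : nat) :
  IM_optimal e #|V|.-1 s x y z ->
  let C := [set v | s v] in
  min_zero_forcing_set e C /\ pt_graph_is e z /\ pt_set_is e C z.
Proof.
move=> opt C; have [feas _] := opt.
have forceC : zf_prop e C z = setT := IM_zero_forcing feas.
have minC : min_zero_forcing_set e C.
  split=> [|D /zero_forcing_pt_set [t ptD]]; first by exists z.
  exact: (IM_optimal_lex opt ptD).1.
have [t ptC] := zero_forcing_pt_set (ex_intro _ z forceC).
have eq_tz : t = z.
  apply/anti_leq; rewrite (pt_set_leq_forcing ptC forceC).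
  exact: (IM_optimal_lex opt ptC).2.
subst t.
do !split=> //; first by exists C.
move=> C' t' [zfC' minC'] ptC'; apply: (IM_optimal_lex opt ptC').2.
by apply/anti_leq; rewrite (minC.2 _ zfC') (minC' _ minC.1).
Qed.
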